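(* There exists $C=C(\dim G)$ such that the following holds. Let $\eta>0$, let $B\subseteq B_1^U$ be a ball of Lebesgue measure at least $\eta$, let $\rho>0$, $t\in\mathbb R$ and $v\in Ge_1$. Then $$\bigl|\{\mathbf s\in B:\|a_tu_{\mathbf s}v\|\le e^t\eta^2\rho^2\|v\|\}\bigr|\le C\rho\,|B|.$$
   Context: Fix $n\ge3$. $G=\mathrm{SO}^\circ(n,1)$ (identity component of determinant-one matrices preserving $Q_0(x)=2x_1x_{n+1}-\sum_{k=2}^nx_k^2$) acting linearly on $\mathbb R^{n+1}$ with Euclidean norm; $e_1$ is the first standard basis vector. $a_t=\mathrm{diag}(e^t,1,\dots,1,e^{-t})$; $u_{\mathbf s}=n(\mathbf s,0)$ with $n(\mathbf s,r)=\begin{pmatrix}1&(\mathbf s,r)&\frac12\|(\mathbf s,r)\|^2\\0&I_{n-1}&(\mathbf s,r)^T\\0&0&1\end{pmatrix}$. $B_1^U=\{\mathbf s\in\mathbb R^{n-2}:\|\mathbf s\|\le1\}$ with Lebesgue measure $|\cdot|$ normalized so $|B_1^U|=1$. *)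

From HB Require Import structures.
From mathcomp Require Import all_boot all_order all_algebra.
From mathcomp Require Import all_classical all_reals all_analysis.
Unset Printing Implicit Defensive.
Import Order.TTheory GRing.Theory Num.Theory.
Import numFieldNormedType.Exports.
Local Open Scope classical_set_scope.
Local Open Scope ring_scope.

Section Defs.
Variable R : realType.

Definition eucl_norm (m : nat) (x : 'cV[R]_m) : R := Num.sqrt (\sum_(i < m) x i 0 ^+ 2).
Definition eucl_normr k (s : 'rV[R]_k) : R := Num.sqrt (\sum_(i < k) s 0 i ^+ 2).

(* Coordinates are indexed 0..n (paper's x_1 .. x_{n+1}). *)
Definition Q0 n (x : 'cV[R]_n.+1) : R :=
  2 * x ord0 0 * x ord_max 0 - \sum_(i < n.+1 | (0 < i < n)%N) x i 0 ^+ 2.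

Definition SOQ0 n : set 'M[R]_n.+1 :=
  [set g | \det g = 1 /\ forall x : 'cV[R]_n.+1, Q0 _ (g *m x) = Q0 _ x].

Definition Gn n : set 'M[R]_n.+1 := connected_component (SOQ0 n) (1%:M : 'M[R]_n.+1).

Definition e1 n : 'cV[R]_n.+1 := \col_i (i == ord0)%:R.

Definition orbit_e1 n : set 'cV[R]_n.+1 := [set g *m e1 n | g in Gn n].

Definition a_t n (t : R) : 'M[R]_n.+1 :=
  \matrix_(i, j) (if i == j then
                    (if i == ord0 then expR t
                     else if i == ord_max then expR (- t) else 1)
                  else 0).

(* m-th coordinate (0-based) of the vector (s,0) in R^{k+1}; zero beyond k *)
Definition padc k (s : 'rV[R]_k) (m : nat) : R :=
  if insub m is Some i then s 0 i else 0.

(* u_s = n((s,0)) for s in R^{n-2}, written with 0-based indices: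
   row 0 = (1, w, |w|^2/2), rows 1..n-1 = (0, I, w^T), row n = (0,..,0,1),
   where w = (s,0) in R^{n-1}, w_{m} = padc s m (0-based). *)
Definition u_s (n : nat) (s : 'rV[R]_(n - 2)) : 'M[R]_n.+1 :=
  \matrix_(i, j)
    (if i == j then 1
     else if (val i == 0%N) && (0 < val j < n)%N then padc _ s (val j).-1
     else if (val i == 0%N) && (val j == n) then (eucl_normr _ s ^+ 2) / 2
     else if (0 < val i < n)%N && (val j == n) then padc _ s (val i).-1
     else 0).

(* Lebesgue outer measure on R^k: infimum of total volume of countable
   covers by closed boxes [a_1,b_1] x ... x [a_k,b_k]. *)
Definition box k (ab : 'rV[R]_k * 'rV[R]_k) : set 'rV[R]_k :=
  [set s | forall i, ab.1 0 i <= s 0 i <= ab.2 0 i].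
Definition box_vol k (ab : 'rV[R]_k * 'rV[R]_k) : R :=
  \prod_(i < k) Num.max (ab.2 0 i - ab.1 0 i) 0.
Definition leb_outer k (A : set 'rV[R]_k) : \bar R :=
  ereal_inf [set (\sum_(j <oo) (box_vol k (F j))%:E)%E
            | F in [set F : nat -> 'rV[R]_k * 'rV[R]_k
                    | A `<=` \bigcup_j box k (F j)]].

Definition cball k (c : 'rV[R]_k) (r : R) : set 'rV[R]_k :=
  [set s | eucl_normr k (s - c) <= r].

Definition B1U k : set 'rV[R]_k := cball k 0 1.

(* Lebesgue measure normalized so that |B_1^U| = 1 *)
Definition nmeas k (A : set 'rV[R]_k) : \bar R :=
  (leb_outer k A * ((fine (leb_outer k (B1U k)))^-1)%:E)%E.

End Defs.

Arguments eucl_norm {R m}.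
Arguments eucl_normr {R k}.
Arguments Q0 {R n}.
Arguments SOQ0 {R}.
Arguments Gn {R}.
Arguments e1 {R}.
Arguments orbit_e1 {R}.
Arguments a_t {R}.
Arguments padc {R k}.
Arguments u_s {R} n.
Arguments box {R k}.
Arguments box_vol {R k}.
Arguments leb_outer {R k}.
Arguments cball {R k}.
Arguments B1U {R}.
Arguments nmeas {R k}.

From HB Require Import structures.
From mathcomp Require Import all_boot all_order all_algebra.
From mathcomp Require Import all_classical all_reals all_analysis.
From mathcomp Require Import ring lra zify.
Import Order.TTheory GRing.Theory Num.Theory.
Import numFieldNormedType.Exports.
Local Open Scope classical_set_scope.
Local Open Scope ring_scope.

(* Write v = (x, a, c, b) with a in R^(n-2). Vectors of G e_1 are null for Q_0, i.e.
   2 x b = |a|^2 + c^2, and then b (u_s v)_1 = (|b s + a|^2 + c^2) / 2 while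
   2 |b| |v| = |a|^2 + c^2 + 2 b^2. Since a_t scales the first coordinate by e^t,
   |a_t u_s v| <= e^t d |v| forces |(u_s v)_1| <= d |v|, and combining the two
   identities gives |s - s_0|^2 <= 7 d for s_0 = -a / b. With d = eta^2 rho^2 the
   set of such s lies in a ball of radius 3 eta rho, of normalized measure at most
   (3 eta rho)^(n-2) <= 3 eta rho <= 3 rho |B|, because eta <= |B| <= 1. *)

Section EuclideanNorm.
Context {R : realType}.

Definition dotr {k} (s t : 'rV[R]_k) : R := \sum_(i < k) s 0 i * t 0 i.

Lemma eucl_normr_ge0 {k} (s : 'rV[R]_k) : 0 <= eucl_normr s.
Proof. exact: sqrtr_ge0. Qed.

Lemma sqr_eucl_normr {k} (s : 'rV[R]_k) : eucl_normr s ^+ 2 = \sum_(i < k) s 0 i ^+ 2.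
Proof. by rewrite sqr_sqrtr // sumr_ge0 // => i _; rewrite sqr_ge0. Qed.

Lemma eucl_normrZ {k} (a : R) (s : 'rV[R]_k) : eucl_normr (a *: s) = `|a| * eucl_normr s.
Proof.
rewrite /eucl_normr -sqrtr_sqr -sqrtrM ?sqr_ge0 // mulr_sumr; congr Num.sqrt.
by apply: eq_bigr => i _; rewrite mxE exprMn.
Qed.

Lemma sqr_eucl_normrD {k} (s t : 'rV[R]_k) :
  eucl_normr (s + t) ^+ 2 = eucl_normr s ^+ 2 + 2 * dotr s t + eucl_normr t ^+ 2.
Proof.
rewrite !sqr_eucl_normr /dotr mulr_sumr -!big_split /=.
by apply: eq_bigr => i _; rewrite mxE; ring.
Qed.

Lemma dotrZl {k} (a : R) (s t : 'rV[R]_k) : dotr (a *: s) t = a * dotr s t.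
Proof. by rewrite /dotr mulr_sumr; apply: eq_bigr => i _; rewrite mxE mulrA. Qed.

Lemma dotr0 {k} (s : 'rV[R]_k) : dotr s 0 = 0.
Proof. by rewrite /dotr big1 // => i _; rewrite mxE mulr0. Qed.

Lemma sqr_eucl_normrD_le {k} (s t : 'rV[R]_k) :
  eucl_normr (s + t) ^+ 2 <= 2 * eucl_normr s ^+ 2 + 2 * eucl_normr t ^+ 2.
Proof.
rewrite !sqr_eucl_normr !mulr_sumr -big_split /=.
apply: ler_sum => i _; rewrite mxE.
by have := sqr_ge0 (s 0 i - t 0 i); nra.
Qed.

Lemma eucl_normr_eq0 {k} (s : 'rV[R]_k) : eucl_normr s = 0 -> s = 0.
Proof.
move=> s0; have /psumr_eq0P sq0 : \sum_(i < k) s 0 i ^+ 2 = 0.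
  by rewrite -sqr_eucl_normr s0 expr0n.
apply/rowP => i; rewrite mxE; apply/eqP; rewrite -sqrf_eq0; apply/eqP.
by apply: sq0 => // j _; rewrite sqr_ge0.
Qed.

Lemma eucl_normr_tr {k} (v : 'cV[R]_k) : eucl_normr v^T = eucl_norm v.
Proof. by congr Num.sqrt; apply: eq_bigr => i _; rewrite mxE. Qed.

Lemma eucl_norm_eq0 {k} (v : 'cV[R]_k) : eucl_norm v = 0 -> v = 0.
Proof. by rewrite -eucl_normr_tr => /eucl_normr_eq0 /eqP; rewrite trmx_eq0 => /eqP. Qed.

Lemma abs_le_eucl_norm {k} (v : 'cV[R]_k.+1) : `|v ord0 0| <= eucl_norm v.
Proof.
rewrite /eucl_norm -sqrtr_sqr; apply: ler_wsqrtr.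
by rewrite big_ord_recl lerDl; apply: sumr_ge0 => i _; exact: sqr_ge0.
Qed.

End EuclideanNorm.

Section NormalizedMeasure.
Context {R : realType}.

Lemma box_vol_ge0 {k} (ab : 'rV[R]_k * 'rV[R]_k) : 0 <= box_vol ab.
Proof. by apply: prodr_ge0 => i _; rewrite le_max lexx orbT. Qed.

Lemma leb_outer_ge0 {k} (A : set 'rV[R]_k) : (0 <= leb_outer A)%E.
Proof.
apply: le_ereal_inf_tmp => _ [F _ <-]; apply: nneseries_ge0 => i _ _.
by rewrite lee_fin box_vol_ge0.
Qed.

Lemma le_leb_outer {k} {A B : set 'rV[R]_k} :
  A `<=` B -> (leb_outer A <= leb_outer B)%E.
Proof.
move=> AB; apply: ereal_inf_le_tmp => _ [F BF <-]; exists F => //.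
exact: subset_trans BF.
Qed.

(* A cover of the unit ball by boxes, rescaled by r and translated by c, covers [cball c r]. *)
Lemma leb_outer_cball_le {k} (c : 'rV[R]_k) (r : R) : 0 < r ->
  (leb_outer (cball c r) <= (r ^+ k)%:E * leb_outer (B1U k))%E.
Proof.
move=> r0; have rk0 : 0 < r ^+ k by rewrite exprn_gt0.
rewrite -lee_pdivrMl //; apply: le_ereal_inf_tmp => _ [F B1F <-].
rewrite lee_pdivrMl // -nneseriesZl; last by move=> i _; rewrite lee_fin box_vol_ge0.
apply: ereal_inf_lbound; exists (fun j => (c + r *: (F j).1, c + r *: (F j).2)).
  move=> s hs; have : B1U k (r^-1 *: (s - c)).
    rewrite /B1U /cball /= subr0 eucl_normrZ ger0_norm ?invr_ge0 ?(ltW r0) //.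
    by rewrite mulrC ler_pdivrMr // mul1r.
  move=> /B1F [j _ Fj]; exists j => // i; have := Fj i; rewrite !mxE /=.
  set u := r^-1 * _ => /andP [lo hi].
  have -> : s 0 i = c 0 i + r * u.
    by rewrite /u mulrA divff ?gt_eqF // mul1r addrCA subrr addr0.
  by rewrite !lerD2l !ler_pM2l // lo hi.
apply: congr_lim; apply/funext => N; apply: eq_bigr => j _; congr (_%:E).
have -> : r ^+ k = \prod_(i < k) r by rewrite prodr_const card_ord.
rewrite -big_split /=.
apply: eq_bigr => i _; rewrite !mxE maxr_pMr ?ltW // mulr0.
by congr (Num.max _ _); ring.
Qed.

Lemma nmeas_ge0 {k} (A : set 'rV[R]_k) : (0 <= nmeas A)%E.
Proof. by apply: mule_ge0; rewrite ?leb_outer_ge0 // lee_fin invr_ge0 fine_ge0 ?leb_outer_ge0. Qed.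

Lemma le_nmeas {k} {A B : set 'rV[R]_k} : A `<=` B -> (nmeas A <= nmeas B)%E.
Proof.
move=> AB; apply: lee_wpmul2r; last exact: le_leb_outer.
by rewrite lee_fin invr_ge0 fine_ge0 ?leb_outer_ge0.
Qed.

Lemma nmeas_cball_le {k} (c : 'rV[R]_k) (r : R) : 0 < r ->
  (nmeas (cball c r) <= (r ^+ k)%:E * nmeas (B1U k))%E.
Proof.
move=> r0; rewrite /nmeas muleA; apply: lee_wpmul2r; last exact: leb_outer_cball_le.
by rewrite lee_fin invr_ge0 fine_ge0 ?leb_outer_ge0.
Qed.

(* The normalization is only meaningful when [leb_outer (B1U k)] is finite and positive;
   otherwise [fine] returns 0 and [nmeas] vanishes identically. *)
Lemma nmeas_B1U {k} (A : set 'rV[R]_k) :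
  (0 < nmeas A)%E -> nmeas (B1U k : set 'rV[R]_k) = 1%E.
Proof.
rewrite /nmeas; have := leb_outer_ge0 (B1U k).
case: (leb_outer _) => [L||] //= L0; last by rewrite invr0 mule0 ltxx.
have [->|L_neq0 _] := eqVneq L 0; first by rewrite invr0 mule0 ltxx.
by rewrite -EFinM divff.
Qed.

End NormalizedMeasure.

Section Coordinates.
Context {R : realType}.

Definition vcoord {k} (v : 'cV[R]_k) (m : nat) : R := padc v^T m.

Lemma padcE {k} (s : 'rV[R]_k) (i : 'I_k) : padc s i = s 0 i.
Proof. by rewrite /padc valK. Qed.

Lemma padc_out {k} (s : 'rV[R]_k) m : (k <= m)%N -> padc s m = 0.
Proof. by move=> km; rewrite /padc insubF // ltnNge km. Qed.

Lemma vcoordE {k} (v : 'cV[R]_k) (i : 'I_k) : vcoord v i = v i 0.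
Proof. by rewrite /vcoord padcE mxE. Qed.

Lemma sum_split_coords n (F : nat -> R) : (2 <= n)%N ->
  \sum_(i < n.+1) F i = F 0%N + \sum_(i < n - 2) F i.+1 + F n.-1 + F n.
Proof.
case: n => [|[|k]] // _; rewrite !subSS subn0.
rewrite -(big_mkord xpredT F) -(big_mkord xpredT (fun i => F i.+1)).
by rewrite big_nat_recl // big_nat_recr //= big_nat_recr //= !addrA.
Qed.

Definition vmid {n} (v : 'cV[R]_n.+1) : 'rV[R]_(n - 2) := \row_(i < n - 2) vcoord v i.+1.

Definition cusp_center {n} (v : 'cV[R]_n.+1) : 'rV[R]_(n - 2) :=
  - (vcoord v n)^-1 *: vmid v.

End Coordinates.

Section NullVector.
Context {R : realType} {n : nat}.
Variable v : 'cV[R]_n.+1.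
Hypothesis n_ge2 : (2 <= n)%N.

Local Notation x := (vcoord v 0%N).
Local Notation a := (vmid v).
Local Notation c := (vcoord v n.-1).
Local Notation b := (vcoord v n).

Lemma sqr_eucl_norm_coords :
  eucl_norm v ^+ 2 = x ^+ 2 + eucl_normr a ^+ 2 + c ^+ 2 + b ^+ 2.
Proof.
rewrite /eucl_norm sqr_sqrtr; last by apply: sumr_ge0 => i _; exact: sqr_ge0.
rewrite sqr_eucl_normr (eq_bigr (fun i : 'I_n.+1 => vcoord v i ^+ 2)).
  rewrite (sum_split_coords _ (fun m => vcoord v m ^+ 2)) //.
  by under [in RHS]eq_bigr do rewrite mxE.
by move=> i _; rewrite vcoordE.
Qed.

Lemma Q0_coords : Q0 v = 2 * x * b - (eucl_normr a ^+ 2 + c ^+ 2).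
Proof.
rewrite /Q0 big_mkcond (eq_bigr (fun i : 'I_n.+1 =>
  if (0 < i < n)%N then vcoord v i ^+ 2 else 0)); last by move=> i _; rewrite vcoordE.
rewrite (sum_split_coords _ (fun m => if (0 < m < n)%N then vcoord v m ^+ 2 else 0)) //=.
rewrite ltnn andbF add0r addr0 -(vcoordE v ord0) -(vcoordE v ord_max).
have -> : (0 < n.-1 < n)%N by lia.
rewrite sqr_eucl_normr; congr (_ - (_ + _)); apply: eq_bigr => i _.
by rewrite mxE ifT //; have := ltn_ord i; lia.
Qed.

Lemma u_s_first_coord (s : 'rV[R]_(n - 2)) :
  (u_s n s *m v) ord0 0 = x + dotr s a + eucl_normr s ^+ 2 / 2 * b.
Proof.
pose F (m : nat) : R := (if m == 0%N then 1 else if (0 < m < n)%N then padc s m.-1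
             else if m == n then eucl_normr s ^+ 2 / 2 else 0) * vcoord v m.
rewrite mxE (eq_bigr (fun j : 'I_n.+1 => F j)); last first.
  by move=> j _; rewrite /F (vcoordE v j) !mxE -val_eqE /= eq_sym.
rewrite (sum_split_coords _ F) // /F /= ltnn andbF eqxx mul1r.
have -> : (n.-1 == 0%N) = false by lia.
have -> : (0 < n.-1 < n)%N by lia.
have -> : (n == 0%N) = false by lia.
rewrite padc_out ?mul0r ?addr0; last lia.
congr (_ + _ + _); apply: eq_bigr => i _.
by rewrite ifT ?padcE ?mxE //; have := ltn_ord i; lia.
Qed.

Hypothesis v_null : Q0 v = 0.

Let two_xb : 2 * x * b = eucl_normr a ^+ 2 + c ^+ 2.
Proof. by apply/eqP; rewrite -subr_eq0 -Q0_coords v_null. Qed.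

(* Completing the square: along the horospherical orbit, b times the first
   coordinate of [u_s v] is a sum of squares vanishing exactly at [s = cusp_center v]. *)
Lemma null_u_s_first_coord (s : 'rV[R]_(n - 2)) :
  2 * b * (u_s n s *m v) ord0 0 = eucl_normr (b *: s + a) ^+ 2 + c ^+ 2.
Proof.
rewrite u_s_first_coord sqr_eucl_normrD eucl_normrZ dotrZl exprMn (real_normK (num_real _)).
by rewrite -[in RHS]addrA -two_xb; field.
Qed.

Lemma null_eucl_norm :
  2 * `|b| * eucl_norm v = eucl_normr a ^+ 2 + c ^+ 2 + 2 * b ^+ 2.
Proof.
have lhs0 : 0 <= 2 * `|b| * eucl_norm v by rewrite !mulr_ge0 ?sqrtr_ge0.
have rhs0 : 0 <= eucl_normr a ^+ 2 + c ^+ 2 + 2 * b ^+ 2.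
  by have := sqr_ge0 b; have := sqr_ge0 c; have := sqr_ge0 (eucl_normr a); lra.
apply/eqP; rewrite -(eqrXn2 (isT : (0 < 2)%N) lhs0 rhs0); apply/eqP.
rewrite !exprMn (real_normK (num_real _)) sqr_eucl_norm_coords.
have -> : eucl_normr a ^+ 2 = 2 * x * b - c ^+ 2 by rewrite two_xb; ring.
ring.
Qed.

Lemma null_u_s_small (s : 'rV[R]_(n - 2)) (d : R) :
  0 <= d <= 1 / 8 -> eucl_normr s <= 1 ->
  `|(u_s n s *m v) ord0 0| <= d * eucl_norm v ->
  eucl_normr (b *: s + a) ^+ 2 <= 7 * d * b ^+ 2.
Proof.
move=> /andP [d0 d1] s1 small.
set W := eucl_normr (b *: s + a) ^+ 2.
have a_le : eucl_normr a ^+ 2 <= 2 * W + 2 * b ^+ 2.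
  have -> : a = (b *: s + a) + (- b) *: s by rewrite scaleNr addrC addKr.
  apply: le_trans (sqr_eucl_normrD_le _ _) _.
  rewrite -/W eucl_normrZ exprMn (real_normK (num_real _)) sqrrN lerD2l ler_wpM2l //.
  by rewrite ler_piMr ?sqr_ge0 // exprn_ile1 ?eucl_normr_ge0.
have Y_le : W + c ^+ 2 <= d * (2 * W + c ^+ 2 + 4 * b ^+ 2).
  rewrite -null_u_s_first_coord; apply: le_trans (ler_norm _) _.
  rewrite !normrM (ger0_norm (ler0n _ 2)).
  apply: le_trans (_ : 2 * `|b| * (d * eucl_norm v) <= _).
    by rewrite ler_wpM2l ?mulr_ge0.
  rewrite mulrCA null_eucl_norm ler_wpM2l //; lra.
have W0 : 0 <= W := sqr_ge0 _.
have : 0 <= (1 / 8 - d) * W by rewrite mulr_ge0 ?subr_ge0.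
have := mulr_ge0 d0 (sqr_ge0 c); have := mulr_ge0 d0 (sqr_ge0 b); nra.
Qed.

Lemma null_last_coord_neq0 (s : 'rV[R]_(n - 2)) (d : R) :
  v != 0 -> d < 1 -> `|(u_s n s *m v) ord0 0| <= d * eucl_norm v -> b != 0.
Proof.
move=> v_neq0 d1 small; apply: contraNneq v_neq0 => b0; apply/eqP/eucl_norm_eq0.
have /eqP := null_eucl_norm.
rewrite b0 normr0 mulr0 mul0r expr0n mulr0 addr0 eq_sym paddr_eq0 ?sqr_ge0 //.
move=> /andP [/eqP a2 /eqP c2].
have N_x : eucl_norm v = `|x|.
  apply/eqP; rewrite -(eqrXn2 (isT : (0 < 2)%N)) ?sqrtr_ge0 // (real_normK (num_real _)).
  by rewrite sqr_eucl_norm_coords a2 c2 b0 expr0n !addr0.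
have a0 : a = 0 by apply: eucl_normr_eq0; apply/eqP; rewrite -sqrf_eq0 a2.
move: small; rewrite u_s_first_coord a0 dotr0 b0 mulr0 !addr0 N_x => small.
apply/eqP; rewrite eq_le normr_ge0 andbT; nra.
Qed.

Lemma sqr_dist_cusp_center_le (s : 'rV[R]_(n - 2)) (d : R) :
  v != 0 -> 0 <= d <= 1 / 8 -> eucl_normr s <= 1 ->
  `|(u_s n s *m v) ord0 0| <= d * eucl_norm v ->
  eucl_normr (s - cusp_center v) ^+ 2 <= 7 * d.
Proof.
move=> v_neq0 d_range s1 small.
have b_neq0 : b != 0.
  by apply: null_last_coord_neq0 v_neq0 _ small; case/andP: d_range => _; lra.
have b2_gt0 : 0 < b ^+ 2 by rewrite exprn_even_gt0.
rewrite -(ler_pM2l b2_gt0) -(real_normK (num_real b)) -exprMn -eucl_normrZ.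
have -> : b *: (s - cusp_center v) = b *: s + a.
  by rewrite /cusp_center scalerBr scalerA mulrN divff // scaleN1r opprK.
by rewrite (real_normK (num_real b)) mulrC; apply: null_u_s_small.
Qed.

End NullVector.

Section Orbit.
Context {R : realType}.

Lemma a_t_first_coord n t (w : 'cV[R]_n.+1) :
  (a_t n t *m w) ord0 0 = expR t * w ord0 0.
Proof.
rewrite mxE big_ord_recl big1 ?addr0; first by rewrite !mxE eqxx.
by move=> i _; rewrite !mxE (negbTE (neq_lift _ _)) mul0r.
Qed.

Lemma Q0_e1 n : (0 < n)%N -> Q0 (e1 n : 'cV[R]_n.+1) = 0.
Proof.
move=> n_gt0; rewrite /Q0 !mxE eqxx -val_eqE /= gtn_eqF // mulr0.
by rewrite big1 ?subr0 // => i /andP [i_gt0 _]; rewrite mxE -val_eqE /= gtn_eqF // expr0n.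
Qed.

Lemma orbit_e1_null {n} (v : 'cV[R]_n.+1) : (0 < n)%N -> orbit_e1 n v -> Q0 v = 0.
Proof.
by move=> n_gt0 [g /connected_component_sub [_ g_Q0] <-]; rewrite g_Q0 Q0_e1.
Qed.

Lemma orbit_e1_neq0 {n} (v : 'cV[R]_n.+1) : orbit_e1 n v -> v != 0.
Proof.
move=> [g /connected_component_sub [g_det _] <-]; apply/eqP => ge1_eq0.
have : invmx g *m (g *m e1 n) = e1 n.
  by rewrite mulmxA mulVmx ?mul1mx // unitmxE g_det unitr1.
rewrite ge1_eq0 mulmx0 => /matrixP /(_ ord0 0) /eqP.
by rewrite !mxE eqxx eq_sym oner_eq0.
Qed.

Lemma orbit_sublevel_near_center {n} (v : 'cV[R]_n.+1) (s : 'rV[R]_(n - 2)) (t d : R) :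
  (2 <= n)%N -> orbit_e1 n v -> 0 <= d <= 1 / 8 -> eucl_normr s <= 1 ->
  eucl_norm (a_t n t *m u_s n s *m v) <= expR t * d * eucl_norm v ->
  eucl_normr (s - cusp_center v) ^+ 2 <= 7 * d.
Proof.
move=> n_ge2 v_orb d_range s1 small.
have v_null := orbit_e1_null _ (ltnW n_ge2) v_orb.
apply: (sqr_dist_cusp_center_le v n_ge2 v_null _ _ (orbit_e1_neq0 _ v_orb) d_range s1).
have := le_trans (abs_le_eucl_norm _) small.
by rewrite -mulmxA a_t_first_coord normrM gtr0_norm ?expR_gt0 // -mulrA ler_pM2l ?expR_gt0.
Qed.

End Orbit.

Theorem lemma5p1 (R : realType) (n : nat) (hn : (3 <= n)%N) :
  exists C : R, 0 < C /\
  forall (eta : R), 0 < eta ->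
  forall (c : 'rV[R]_(n - 2)) (r : R),
    cball c r `<=` B1U (n - 2) ->
    (eta%:E <= nmeas (cball c r))%E ->
  forall (rho t : R), 0 < rho ->
  forall v : 'cV[R]_n.+1, orbit_e1 n v ->
    (nmeas [set s | cball c r s /\
              (eucl_norm (a_t n t *m u_s n s *m v)
                <= expR t * eta ^+ 2 * rho ^+ 2 * eucl_norm v)%R]
     <= (C * rho)%:E * nmeas (cball c r))%E.
Proof.
exists 3; split => // eta eta0 c r cr_sub eta_le rho t rho0 v v_orb.
set S := [set s | _ /\ _].
have S_sub : S `<=` cball c r by move=> s [].
have B1U_1 : nmeas (B1U (n - 2) : set 'rV[R]_(n - 2)) = 1%E.
  by apply: (nmeas_B1U (cball c r)); apply: lt_le_trans eta_le; rewrite lte_fin.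
have eta1 : eta <= 1 by rewrite -lee_fin -B1U_1 (le_trans eta_le) ?le_nmeas.
have [large | small] := lerP (1 / 3) (eta * rho).
  apply: le_trans (le_nmeas S_sub) _; rewrite -{1}(mul1e (nmeas _)).
  by rewrite lee_wpmul2r ?nmeas_ge0 // lee_fin; nra.
have rad_gt0 : 0 < 3 * eta * rho by rewrite !mulr_gt0.
have S_sub_center : S `<=` cball (cusp_center v) (3 * eta * rho).
  move=> s [/cr_sub s1 sublevel]; rewrite /B1U /cball /= subr0 in s1.
  have d_range : 0 <= eta ^+ 2 * rho ^+ 2 <= 1 / 8.
    by rewrite mulr_ge0 ?sqr_ge0 //=; nra.
  rewrite -[expR t * _ * _]mulrA in sublevel.
  have dist2 := orbit_sublevel_near_center v s t _ (ltnW hn) v_orb d_range s1 sublevel.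
  rewrite /cball /= -(ler_pXn2r (isT : (0 < 2)%N)) ?nnegrE ?eucl_normr_ge0 ?(ltW rad_gt0) //.
  by apply: le_trans dist2 _; nra.
apply: le_trans (le_nmeas S_sub_center) _.
apply: le_trans (nmeas_cball_le _ _ rad_gt0) _; rewrite B1U_1 mule1.
apply: (@le_trans _ _ (3 * eta * rho)%:E).
  by rewrite lee_fin ler_iXnr ?(ltW rad_gt0) //; [lia | lra].
have -> : 3 * eta * rho = 3 * rho * eta by ring.
by rewrite EFinM lee_wpmul2l // lee_fin mulr_ge0 ?ltW.
Qed.
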